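(* Let $q$ be a prime power, $m\ge1$, $1\le k<n$. Let $E\in \mathcal T(k,n)$ and let $\mathcal{U}_0 := \{(u_1,\dots,u_n) \in \mathbb{F}_q^n \mid u_{k+1}=\dots=u_n=0 \}$. Then $\deg f_E=k-\dim\left(\mathrm{rs}(E)\cap \mathcal{U}_0 \right)$.
   Context: $\mathcal T(k,n)=\{E\in \mathbb{F}_q^{k\times n} \mid E \text{ is in reduced row echelon form and } \mathrm{rk}(E)=k\}$; $\mathrm{rs}(E)$ is the $\mathbb{F}_q$-row space of $E$. Let $X$ be the $k\times(n-k)$ matrix whose entries are the distinct indeterminates $x_1,\dots,x_{k(n-k)}$. For $E\in\mathcal T(k,n)$, $f_E:=\det([\,I_k\mid X\,]E^T)\in\mathbb{F}_{q^m}[x_1,\dots,x_{k(n-k)}]$, and $\deg$ denotes total degree. *)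

From HB Require Import structures.
From mathcomp Require Import all_boot all_order all_algebra all_field.
From mathcomp Require Import mpoly.
Set Implicit Arguments. Unset Strict Implicit. Unset Printing Implicit Defensive.
Import GRing.Theory.
Local Open Scope ring_scope.

Definition is_rref (F : fieldType) (k n : nat) (E : 'M[F]_(k, n)) : Prop :=
  exists p : 'I_k -> 'I_n,
    [/\ {mono p : i j / (i < j)%N},
        forall i, E i (p i) = 1,
        forall i i', i' != i -> E i' (p i) = 0
      & forall i (j : 'I_n), (j < p i)%N -> E i j = 0].

Definition in_T (F : fieldType) (k n : nat) (E : 'M[F]_(k, n)) : Prop :=
  is_rref E /\ \rank E = k.

(* U_0 = { u in F^n | u_{k+1} = ... = u_n = 0 }, as the row space of the
   n x n diagonal matrix with ones in the first k diagonal positions *)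
Definition U0mx (F : fieldType) (k n : nat) : 'M[F]_n :=
  \matrix_(i < n, j < n) (((i == j) && (i < k)%N)%:R : F).

Definition Xmx (R : comRingType) (k n : nat) : 'M[{mpoly R[k * (n - k)]}]_(k, n - k) :=
  \matrix_(i < k, j < n - k) 'X_(mxvec_index i j).

Definition IXmx (R : comRingType) (k n : nat) (H : (k <= n)%N)
  : 'M[{mpoly R[k * (n - k)]}]_(k, n) :=
  castmx (erefl k, subnKC H) (row_mx 1%:M (Xmx R k n)).

(* f_E = det([I_k | X] E^T), with E's entries embedded F_q -> F_{q^m} = L *)
Definition fE (F : fieldType) (L : fieldExtType F) (k n : nat) (H : (k <= n)%N)
  (E : 'M[F]_(k, n)) : {mpoly L[k * (n - k)]} :=
  \det (IXmx L H *m (map_mx (fun a : F => (a%:A : L)%:MP) E)^T).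

(* total degree (for a nonzero polynomial) *)
Definition tdeg (R : ringType) (N : nat) (p : {mpoly R[N]}) : nat := (msize p).-1.

From HB Require Import structures.
From mathcomp Require Import all_boot all_order all_algebra all_field.
From mathcomp Require Import mpoly.
Set Implicit Arguments. Unset Strict Implicit. Unset Printing Implicit Defensive.
Import GRing.Theory.
Local Open Scope ring_scope.

(* Write E = [A | B] with A the first k columns. Then f_E = det (A + B X^T) and
   rs(E) :&: U_0 = ker(B) E, so the claim is deg f_E = rank B =: b. Multiplying E
   on the left by an invertible P only scales f_E by det P, so we may assume
   B = pid_mx b *m K with K invertible. Then only the first b rows of A + B X^T
   involve the variables, whence deg f_E <= b. Conversely, the last k - b rows of
   A are independent; completing them to an invertible g and specializing X^T to
   V (t g - A) for a suitable V turns A + B X^T into diag (t,..,t,1,..,1) g,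
   whose determinant has degree b in t. *)

Lemma castmx_mulmx (R : nzRingType) m p n n' (e : n = n')
    (A : 'M[R]_(m, p)) (B : 'M[R]_(p, n)) :
  castmx (erefl m, e) (A *m B) = A *m castmx (erefl p, e) B.
Proof. by case: n' / e; rewrite !castmx_id. Qed.

Lemma mulmx_castmx (R : nzRingType) m p p' n (e : p = p')
    (A : 'M[R]_(m, p)) (B : 'M[R]_(p', n)) :
  castmx (erefl m, e) A *m B = A *m castmx (esym e, erefl n) B.
Proof. by case: p' / e B => B; rewrite !castmx_id. Qed.

Lemma mxrank_castmx_col (F : fieldType) m n n' (e : n = n') (A : 'M[F]_(m, n)) :
  \rank (castmx (erefl m, e) A) = \rank A.
Proof. by case: n' / e; rewrite castmx_id. Qed.

Section Blocks.

Variables (R : nzRingType) (k n : nat) (le_kn : (k <= n)%N).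

Definition lblock m (E : 'M[R]_(m, n)) : 'M[R]_(m, k) :=
  lsubmx (castmx (erefl m, esym (subnKC le_kn)) E).

Definition rblock m (E : 'M[R]_(m, n)) : 'M[R]_(m, n - k) :=
  rsubmx (castmx (erefl m, esym (subnKC le_kn)) E).

Lemma row_mx_blocks m (E : 'M[R]_(m, n)) :
  row_mx (lblock E) (rblock E) = castmx (erefl m, esym (subnKC le_kn)) E.
Proof. exact: hsubmxK. Qed.

Lemma rblockMl m p (A : 'M[R]_(m, p)) (E : 'M[R]_(p, n)) :
  rblock (A *m E) = A *m rblock E.
Proof. by rewrite /rblock castmx_mulmx mulmx_rsub. Qed.

Lemma rblock_eq0P m (E : 'M[R]_(m, n)) :
  reflect (forall i (j : 'I_n), (k <= j)%N -> E i j = 0) (rblock E == 0).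
Proof.
apply: (iffP eqP) => [E0 i j le_kj | E0].
  have lt_jk : (j - k < n - k)%N by rewrite ltn_sub2r // (leq_ltn_trans le_kj).
  have -> : j = cast_ord (subnKC le_kn) (rshift k (Ordinal lt_jk)).
    by apply: val_inj; rewrite /= subnKC.
  have := congr1 (fun M : 'M_(m, n - k) => M i (Ordinal lt_jk)) E0.
  by rewrite !mxE castmxE /= cast_ord_id esymK.
by apply/matrixP => i j; rewrite !mxE castmxE /= cast_ord_id E0 ?leq_addr.
Qed.

End Blocks.

Lemma U0mxE (F : fieldType) k n : U0mx F k n = diag_mx (\row_(j < n) ((j < k)%N)%:R).
Proof. by apply/matrixP => i j; rewrite !mxE; case: (i == j); rewrite ?mulr1n ?mulr0n. Qed.

Section SubspaceU0.

Variables (F : fieldType) (k n : nat) (le_kn : (k <= n)%N).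

Lemma mulmx_U0mxE m (v : 'M[F]_(m, n)) i j :
  (v *m U0mx F k n) i j = v i j * ((j < k)%N)%:R.
Proof. by rewrite U0mxE mul_mx_diag !mxE. Qed.

Lemma sub_U0mxP m (v : 'M[F]_(m, n)) :
  reflect (forall i (j : 'I_n), (k <= j)%N -> v i j = 0) (v <= U0mx F k n)%MS.
Proof.
apply: (iffP idP) => [/submxP[w ->] i j le_kj | v0].
  by rewrite mulmx_U0mxE ltnNge le_kj mulr0.
suff -> : v = v *m U0mx F k n by apply: submxMl.
apply/matrixP => i j; rewrite mulmx_U0mxE.
by case: ltnP => [_|/v0->]; rewrite ?mulr1 ?mul0r.
Qed.

Lemma sub_U0mx_rblock m (v : 'M[F]_(m, n)) :
  (v <= U0mx F k n)%MS = (rblock le_kn v == 0).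
Proof. exact: sameP (sub_U0mxP v) (rblock_eq0P le_kn v). Qed.

Lemma mxrank_cap_U0mx m (E : 'M[F]_(m, n)) : row_free E ->
  \rank (E :&: U0mx F k n)%MS = (m - \rank (rblock le_kn E))%N.
Proof.
move=> freeE; rewrite -mxrank_ker -(mxrankMfree _ freeE).
apply/eqP; rewrite eqn_leq; apply/andP; split; apply: mxrankS.
  have /submxP[w defw] := capmxSl E (U0mx F k n).
  have := capmxSr E (U0mx F k n).
  by rewrite defw sub_U0mx_rblock rblockMl => /eqP/sub_kermxP/submxMr->.
by rewrite sub_capmx submxMl sub_U0mx_rblock rblockMl mulmx_ker /=.
Qed.

End SubspaceU0.

Section MsizeBounds.

Variables (R : idomainType) (N : nat).
Implicit Types (p q : {mpoly R[N]}).

Lemma msizeM_leq p q : (msize (p * q) <= (msize p + msize q).-1)%N.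
Proof.
have [->|p0] := eqVneq p 0; first by rewrite mul0r msize0.
have [->|q0] := eqVneq q 0; first by rewrite mulr0 msize0.
by rewrite msizeM.
Qed.

Lemma msize_signr (b : bool) p : msize ((-1) ^+ b * p) = msize p.
Proof. by case: b; rewrite ?mul1r ?mulN1r ?msizeN. Qed.

Lemma msize_prod_leq (I : Type) (r : seq I) (P : pred I) (G : I -> {mpoly R[N]})
    (d : I -> nat) :
  (forall i, P i -> msize (G i) <= (d i).+1)%N ->
  (msize (\prod_(i <- r | P i) G i) <= (\sum_(i <- r | P i) d i).+1)%N.
Proof.
move=> leG; elim/big_rec2: _ => [|i s p Pi IHp]; first by rewrite msize1.
apply: leq_trans (msizeM_leq _ _) _.
by rewrite -subn1 leq_subLR add1n -addnS -addSn leq_add ?leG.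
Qed.

Lemma msize_det_leq k (M : 'M[{mpoly R[N]}]_k) (d : 'I_k -> nat) :
  (forall i j, msize (M i j) <= (d i).+1)%N -> (msize (\det M) <= (\sum_i d i).+1)%N.
Proof.
move=> leM; apply: leq_trans (msize_sum _ _ _) _.
apply/bigmax_leqP_seq => s _ _; rewrite msize_signr.
exact: msize_prod_leq.
Qed.

End MsizeBounds.

Section LinearSpecialization.

Variables (R : idomainType) (N : nat) (h : 'I_N -> {poly R}).
Hypothesis size_h : forall i, (size (h i) <= 2)%N.

Lemma size_mmap1_leq (m : 'X_{1..N}) : (size (mmap1 h m) <= (mdeg m).+1)%N.
Proof.
rewrite /mmap1 mdegE; elim/big_rec2: _ => [|i p s _ IHp]; first by rewrite size_poly1.
have le_hm : (size (h i ^+ m i) <= (m i).+1)%N.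
  apply: leq_trans (size_poly_exp_leq _ _) _.
  by rewrite ltnS -[leqRHS]mul1n leq_mul2r -subn1 leq_subLR size_h orbT.
apply: leq_trans (size_polyMleq _ _) _.
by rewrite -subn1 leq_subLR add1n -addnS -addSn leq_add.
Qed.

Lemma size_mmap_leq (p : {mpoly R[N]}) : (size (mmap (@polyC R) h p) <= msize p)%N.
Proof.
apply: leq_trans (size_sum _ _ _) _; apply/bigmax_leqP_seq => m m_p _.
rewrite mul_polyC; apply: leq_trans (size_scale_leq _ _) _.
exact: leq_trans (size_mmap1_leq m) (msize_mdeg_lt m_p).
Qed.

End LinearSpecialization.

Definition mxvar (R : nzRingType) k r : 'M[{mpoly R[k * r]}]_(k, r) :=
  \matrix_(i < k, j < r) 'X_(mxvec_index i j).

Lemma map_mxvar (R : nzRingType) (S : comNzRingType) (f : {rmorphism R -> S}) k r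
    (Y : 'M[S]_(k, r)) :
  map_mx (mmap f (fun l => mxvec Y 0 l)) (mxvar R k r) = Y.
Proof. by apply/matrixP => i j; rewrite !mxE mmapX mmap1U mxvecE. Qed.

Section DetIX.

Variables (L : fieldType) (k r : nat).

Definition detIX (A : 'M[L]_k) (B : 'M[L]_(k, r)) : {mpoly L[k * r]} :=
  \det (row_mx 1%:M (mxvar L k r) *m (map_mx (@mpolyC _ L) (row_mx A B))^T).

Lemma detIXE A B :
  detIX A B = \det (map_mx (@mpolyC _ L) A + map_mx (@mpolyC _ L) B *m (mxvar L k r)^T).
Proof.
rewrite /detIX map_row_mx tr_row_mx mul_row_col mul1mx -det_tr.
by rewrite linearD /= trmx_mul !trmxK.
Qed.

Lemma detIX_mull (P : 'M[L]_k) A B :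
  detIX (P *m A) (P *m B) = (\det P)%:MP * detIX A B.
Proof. by rewrite !detIXE !map_mxM -mulmxA -mulmxDr det_mulmx det_map_mx. Qed.

Lemma msize_detIX_mull (P : 'M[L]_k) A B : P \in unitmx ->
  msize (detIX (P *m A) (P *m B)) = msize (detIX A B).
Proof.
by move=> unitP; rewrite detIX_mull mul_mpolyC msizeZ // -unitfE -unitmxE.
Qed.

End DetIX.

Lemma sum_ltn_ord k b : (b <= k)%N -> (\sum_(i < k) (i < b))%N = b.
Proof.
move=> le_bk; rewrite -big_mkcond /= -(big_ord_widen _ (fun _ => 1%N) le_bk).
by rewrite sum1_card card_ord.
Qed.

Lemma mul_pid_mx_row0 (R : nzRingType) k r p b (K : 'M[R]_(r, p)) (i : 'I_k) j :
  (b <= i)%N -> ((pid_mx b : 'M_(k, r)) *m K) i j = 0.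
Proof. by move=> le_bi; rewrite mxE big1 // => l _; rewrite mxE ltnNge le_bi andbF mul0r. Qed.

Lemma det_scale_pid_add_copid (R : comNzRingType) k b (x : R) : (b <= k)%N ->
  \det (x *: pid_mx b + copid_mx b : 'M[R]_k) = x ^+ b.
Proof.
move=> le_bk.
have -> : x *: pid_mx b + copid_mx b = diag_mx (\row_(i < k) (if (i < b)%N then x else 1)).
  apply/matrixP => i j; rewrite !mxE; have [<-|/negPf ne_ij] := eqVneq i j.
    by rewrite eqxx; case: (i < b)%N; rewrite /= ?mulr1 ?mulr0 ?subrr ?subr0 ?addr0 ?add0r.
  by move: ne_ij; rewrite -val_eqE /= => ->; rewrite mulr0 subrr addr0.
rewrite det_diag (eq_bigr (fun i : 'I_k => if (i < b)%N then x else 1)) => [|i _].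
  by rewrite -big_mkcond /= -(big_ord_widen _ (fun _ => x) le_bk) prodr_const card_ord.
by rewrite mxE.
Qed.

Section DetIXDegree.

Variables (L : fieldType) (k r b : nat).

Lemma msize_detIX_pid_leq (A : 'M[L]_k) (K : 'M[L]_r) : (b <= k)%N ->
  (msize (detIX A (pid_mx b *m K)) <= b.+1)%N.
Proof.
move=> le_bk; rewrite detIXE -[in X in (_ <= X.+1)%N](sum_ltn_ord le_bk).
apply: msize_det_leq => i j; rewrite !mxE.
have [lt_ib|le_bi] := ltnP i b; last first.
  rewrite big1 ?addr0 ?msizeC ?leq_b1 // => l _.
  by rewrite mxE mul_pid_mx_row0 // mpolyC0 mul0r.
apply: leq_trans (msizeD_le _ _) _.
rewrite geq_max msizeC (leq_trans (leq_b1 _)) //=.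
apply: leq_trans (msize_sum _ _ _) _; apply/bigmax_leqP_seq => l _ _.
by rewrite !mxE mul_mpolyC (leq_trans (msizeZ_le _ _)) // msizeX mdeg1.
Qed.

Lemma msize_detIX_pid_geq (A : 'M[L]_k) (K : 'M[L]_r) :
    (b <= k)%N -> (b <= r)%N -> K \in unitmx -> row_free (row_mx A (pid_mx b *m K)) ->
  (b.+1 <= msize (detIX A (pid_mx b *m K)))%N.
Proof.
move=> le_bk le_br unitK freeAB.
have rk_copidA : \rank (copid_mx b *m A) = \rank (copid_mx b : 'M[L]_k).
  have := mxrankMfree (copid_mx b) freeAB.
  by rewrite mul_mx_row mulmxA mul_copid_mx_pid // mul0mx rank_row_mx0.
have [g unit_g copid_gA] := complete_unitmx rk_copidA.
pose V := invmx K *m pid_mx b : 'M[L]_(r, k).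
have pidKV : (pid_mx b : 'M_(k, r)) *m K *m V = pid_mx b.
  by rewrite /V mulmxA mulmxK // pid_mx_id.
(* Chosen so that A + (pid_mx b *m K) *m Y^T = ('X *: pid_mx b + copid_mx b) *m g. *)
pose Y := ('X *: map_mx polyC (V *m g) - map_mx polyC (V *m A))^T.
pose phi := mmap (@polyC L) (fun l => mxvec Y 0 l).
have size_Y (l : 'I_(k * r)) : (size (mxvec Y 0%R l) <= 2)%N.
  case/mxvec_indexP: l => i j; rewrite mxvecE !mxE mulrC -polyCN size_MXaddC.
  by case: ifP => // _; rewrite ltnS size_polyC_leq1.
have phi_mpolyC : phi \o @mpolyC _ L =1 polyC by move=> c; apply: mmapC.
have phi_det : phi (detIX A (pid_mx b *m K)) = (\det g)%:P * 'X^b.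
  rewrite detIXE -[LHS]det_map_mx map_mxD map_mxM -map_trmx map_mxvar -!map_mx_comp.
  rewrite !(eq_map_mx _ phi_mpolyC) /Y trmxK.
  have copid_gE :
      copid_mx b *m map_mx polyC g = map_mx polyC A - pid_mx b *m map_mx polyC A.
    rewrite -(map_copid_mx polyC) -map_mxM -copid_gA map_mxM map_copid_mx.
    by rewrite mulmxBl mul1mx.
  have -> : map_mx polyC A + map_mx polyC (pid_mx b *m K) *m
      ('X *: map_mx polyC (V *m g) - map_mx polyC (V *m A)) =
      ('X *: pid_mx b + copid_mx b) *m map_mx polyC g.
    rewrite [map_mx _ (V *m g)]map_mxM [map_mx _ (V *m A)]map_mxM scalemxAr -mulmxBr.
    rewrite mulmxA -map_mxM pidKV map_pid_mx.
    by rewrite mulmxDl copid_gE mulmxBr -scalemxAl -scalemxAr addrCA.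
  by rewrite det_mulmx det_scale_pid_add_copid // det_map_mx mulrC.
have size_phi : (size (phi (detIX A (pid_mx b *m K)))
                  <= msize (detIX A (pid_mx b *m K)))%N by exact: size_mmap_leq.
have det_g_neq0 : \det g != 0 by rewrite -unitfE -unitmxE.
by rewrite phi_det size_Cmul ?size_polyXn in size_phi.
Qed.

End DetIXDegree.

Lemma msize_detIX (L : fieldType) k r (A : 'M[L]_k) (B : 'M[L]_(k, r)) :
  row_free (row_mx A B) -> msize (detIX A B) = (\rank B).+1.
Proof.
move=> freeAB; pose P := invmx (col_ebase B).
have unitP : P \in unitmx by rewrite unitmx_inv col_ebase_unit.
have PB : P *m B = pid_mx (\rank B) *m row_ebase B.
  by rewrite -{1}(mulmx_ebase B) !mulmxA mulVmx ?col_ebase_unit // mul1mx.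
have freePAB : row_free (row_mx (P *m A) (P *m B)).
  by rewrite -mul_mx_row /row_free (eqmxMfull _ (_ : row_full P)) ?row_full_unit.
rewrite -(msize_detIX_mull _ _ unitP) PB in freePAB *; apply/eqP; rewrite eqn_leq.
rewrite msize_detIX_pid_leq ?rank_leq_row //=.
by rewrite msize_detIX_pid_geq ?rank_leq_row ?rank_leq_col ?row_ebase_unit.
Qed.

Lemma fE_detIX (F : fieldType) (L : fieldExtType F) k n (le_kn : (k <= n)%N)
    (E : 'M[F]_(k, n)) :
  fE L le_kn E =
    detIX (map_mx (in_alg L) (lblock le_kn E)) (map_mx (in_alg L) (rblock le_kn E)).
Proof.
rewrite /fE /IXmx mulmx_castmx /detIX -map_row_mx row_mx_blocks -map_mx_comp.
by rewrite map_castmx trmx_cast.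
Qed.

Theorem lemma4p5 (F : finFieldType) (L : fieldExtType F) (m k n : nat)
  (hm : (1 <= m)%N) (hL : \dim (fullv : {vspace L}) = m)
  (hk : (1 <= k)%N) (hkn : (k < n)%N)
  (E : 'M[F]_(k, n)) (hE : in_T E) :
  fE L (ltnW hkn) E != 0 /\
  tdeg (fE L (ltnW hkn) E) = (k - \rank (E :&: U0mx F k n)%MS)%N.
Proof.
have freeE : row_free E by case: hE => _ rkE; rewrite /row_free rkE.
set le_kn := ltnW hkn.
have freeAB : row_free (row_mx (map_mx (in_alg L) (lblock le_kn E))
                               (map_mx (in_alg L) (rblock le_kn E))).
  by rewrite -map_row_mx /row_free mxrank_map row_mx_blocks mxrank_castmx_col.
have msize_fE := msize_detIX freeAB.
rewrite -fE_detIX mxrank_map in msize_fE.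
split; first by rewrite -msize_poly_eq0 msize_fE.
by rewrite /tdeg msize_fE (mxrank_cap_U0mx le_kn freeE) subKn ?rank_leq_row.
Qed.
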